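(* Let $f$ be as in the standing setting. For $x\in X$ let $x^+=[x-\frac{1}{L_f}\nabla f(x)]_X$ and $\bar x^+=[x^+]_{X^*}$. Suppose there is a constant $\beta$ with $0<\beta<1$ such that $$\|x^+-\bar x^+\|\le\beta\|x-\bar x\|\qquad\forall x\in X.$$ Then $f$ satisfies the quadratic functional growth condition $f(x)-f^*\ge\frac{\kappa_f}{2}\|x-\bar x\|^2$ for all $x\in X$ with $\kappa_f=L_f(1-\beta)^2$.
   Context: Standing setting: $X\subseteq\mathbb{R}^n$ is a nonempty closed convex set; $f:X\to\mathbb{R}$ is convex and continuously differentiable, with $L_f$-Lipschitz continuous gradient on $X$ ($L_f>0$). Consider $f^*=\min_{x\in X}f(x)$ with optimal set $X^*$ nonempty and closed and $f^*$ finite. $\|\cdot\|$ is the Euclidean norm, $[u]_S$ is the Euclidean projection onto a closed convex set $S$, and $\bar x=[x]_{X^*}$. *)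

(* Euclidean space R^n modelled as functions nat -> R whose
   coordinates at indices >= n vanish. *)
From Stdlib Require Import Reals.
Open Scope R_scope.

Definition vec := nat -> R.

Definition inRn (n : nat) (x : vec) : Prop := forall i, (n <= i)%nat -> x i = 0.

Definition vadd (x y : vec) : vec := fun i => x i + y i.
Definition vsub (x y : vec) : vec := fun i => x i - y i.
Definition vscal (a : R) (x : vec) : vec := fun i => a * x i.

Fixpoint sumR (k : nat) (h : nat -> R) : R :=
  match k with O => 0 | S k' => sumR k' h + h k' end.

Definition inner (n : nat) (x y : vec) : R := sumR n (fun i => x i * y i).
Definition norm (n : nat) (x : vec) : R := sqrt (inner n x x).

Definition subset_Rn (n : nat) (S : vec -> Prop) : Prop := forall x, S x -> inRn n x.

Definition closed_in_Rn (n : nat) (S : vec -> Prop) : Prop :=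
  forall x, inRn n x ->
    (forall eps, eps > 0 -> exists y, S y /\ norm n (vsub x y) < eps) -> S x.

Definition convex_in_Rn (S : vec -> Prop) : Prop :=
  forall x y t, S x -> S y -> 0 <= t <= 1 ->
    S (vadd (vscal t x) (vscal (1 - t) y)).

Definition convex_on (S : vec -> Prop) (f : vec -> R) : Prop :=
  forall x y t, S x -> S y -> 0 <= t <= 1 ->
    f (vadd (vscal t x) (vscal (1 - t) y)) <= t * f x + (1 - t) * f y.

Definition is_gradient_on (n : nat) (S : vec -> Prop) (f : vec -> R) (g : vec -> vec) : Prop :=
  forall x, S x -> inRn n (g x) /\
    forall eps, eps > 0 -> exists delta, delta > 0 /\
      forall y, S y -> norm n (vsub y x) < delta ->
        Rabs (f y - f x - inner n (g x) (vsub y x)) <= eps * norm n (vsub y x).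

Definition lipschitz_on (n : nat) (S : vec -> Prop) (g : vec -> vec) (L : R) : Prop :=
  forall x y, S x -> S y -> norm n (vsub (g x) (g y)) <= L * norm n (vsub x y).

Definition is_proj (n : nat) (S : vec -> Prop) (u p : vec) : Prop :=
  S p /\ forall y, S y -> norm n (vsub u p) <= norm n (vsub u y).

Definition optset (X : vec -> Prop) (f : vec -> R) (fstar : R) : vec -> Prop :=
  fun x => X x /\ f x = fstar.

(* Optimality of x̄ in X* and the error bound give
     ‖x − x̄‖ ≤ ‖x − x̄⁺‖ ≤ ‖x − x⁺‖ + ‖x⁺ − x̄⁺‖ ≤ ‖x − x⁺‖ + β‖x − x̄‖,
   i.e. (1 − β)‖x − x̄‖ ≤ ‖x − x⁺‖.  The descent lemma together with the
   variational inequality of the projection shows that the step decreases f by at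
   least (L_f/2)‖x − x⁺‖², and f(x⁺) ≥ f*.  Convexity of f only serves to make X*
   convex, so that the projections in the hypothesis exist. *)

From Coquelicot Require Import Coquelicot.
From Stdlib Require Import Reals Lra Psatz Lia FunctionalExtensionality ClassicalEpsilon Classical.
Open Scope R_scope.

Ltac vec_ext := apply functional_extensionality; intro; unfold vadd, vsub, vscal; ring.

Lemma sumR_ge0 k h : (forall i, 0 <= h i) -> 0 <= sumR k h.
Proof. intros H; induction k; simpl; [lra | specialize (H k); lra]. Qed.

Lemma inner_ge0 n x : 0 <= inner n x x.
Proof. apply sumR_ge0; intros; nra. Qed.

Lemma inner_sym n x y : inner n x y = inner n y x.
Proof. unfold inner; induction n as [|n IH]; simpl; [ring | rewrite IH; ring]. Qed.

Lemma inner_scal_l n a x y : inner n (vscal a x) y = a * inner n x y.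
Proof. unfold inner, vscal; induction n as [|n IH]; simpl; [ring | rewrite IH; ring]. Qed.

Lemma inner_scal_r n a x y : inner n x (vscal a y) = a * inner n x y.
Proof. unfold inner, vscal; induction n as [|n IH]; simpl; [ring | rewrite IH; ring]. Qed.

Lemma inner_sub_l n x y z : inner n (vsub x y) z = inner n x z - inner n y z.
Proof. unfold inner, vsub; induction n as [|n IH]; simpl; [ring | rewrite IH; ring]. Qed.

Lemma inner_sub_sub n x y :
  inner n (vsub x y) (vsub x y) = inner n x x - 2 * inner n x y + inner n y y.
Proof. unfold inner, vsub; induction n as [|n IH]; simpl; [ring | rewrite IH; ring]. Qed.

Lemma inner_add_add n x y :
  inner n (vadd x y) (vadd x y) = inner n x x + 2 * inner n x y + inner n y y.
Proof. unfold inner, vadd; induction n as [|n IH]; simpl; [ring | rewrite IH; ring]. Qed.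

Lemma parallelogram n u a b :
  let m := vadd (vscal (1/2) a) (vscal (1 - 1/2) b) in
  inner n (vsub a b) (vsub a b) =
  2 * inner n (vsub u a) (vsub u a) + 2 * inner n (vsub u b) (vsub u b)
  - 4 * inner n (vsub u m) (vsub u m).
Proof. unfold inner, vsub, vadd, vscal; induction n as [|n IH]; simpl; [ring | rewrite IH; field]. Qed.

Lemma coord_sq_le_inner n x i : (i < n)%nat -> x i * x i <= inner n x x.
Proof.
  unfold inner; induction n as [|n IH]; intros Hi; [lia|]; simpl.
  pose proof (sumR_ge0 n (fun i => x i * x i) ltac:(intros; nra)).
  destruct (Nat.eq_dec i n) as [->|Hne]; [lra|].
  specialize (IH ltac:(lia)); nra.
Qed.

Lemma norm_ge0 n x : 0 <= norm n x.
Proof. apply sqrt_pos. Qed.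

Lemma norm_sq n x : norm n x ^ 2 = inner n x x.
Proof. unfold norm; rewrite pow2_sqrt; auto using inner_ge0. Qed.

Lemma inner_le_of_norm_le n x y : norm n x <= norm n y -> inner n x x <= inner n y y.
Proof. intros H; rewrite <- !norm_sq; pose proof (norm_ge0 n x); nra. Qed.

Lemma norm_scal n a x : norm n (vscal a x) = Rabs a * norm n x.
Proof.
  unfold norm; rewrite inner_scal_l, inner_scal_r, <- Rmult_assoc, sqrt_mult.
  - f_equal; apply sqrt_Rsqr_abs.
  - nra.
  - apply inner_ge0.
Qed.

Lemma norm_sub_sym n a b : norm n (vsub a b) = norm n (vsub b a).
Proof. unfold norm; f_equal; rewrite !inner_sub_sub, (inner_sym n a b); ring. Qed.

Lemma inner_sq_le n x y : inner n x y ^ 2 <= inner n x x * inner n y y.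
Proof.
  set (a := inner n x y); set (b := inner n y y).
  assert (Hq : forall t, 0 <= inner n x x - 2 * t * a + t * t * b).
  { intro t; pose proof (inner_ge0 n (vsub x (vscal t y))) as H.
    rewrite inner_sub_sub, inner_scal_r, inner_scal_r, inner_scal_l in H; unfold a, b; lra. }
  pose proof (inner_ge0 n x); pose proof (inner_ge0 n y).
  destruct (Req_dec b 0) as [Hb|Hb].
  - destruct (Req_dec a 0) as [Ha|Ha]; [rewrite Ha, Hb; nra|].
    (* the quadratic in t degenerates to a line with nonzero slope *)
    specialize (Hq ((inner n x x + 1) / (2 * a))); rewrite Hb in Hq.
    replace (2 * ((inner n x x + 1) / (2 * a)) * a) with (inner n x x + 1) in Hq
      by (field; auto).
    lra.
  - specialize (Hq (a / b)).
    replace (inner n x x - 2 * (a / b) * a + a / b * (a / b) * b)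
      with ((inner n x x * b - a ^ 2) / b) in Hq by (field; auto).
    assert (0 < b) by (unfold b in *; lra).
    apply Rmult_le_compat_r with (r := b) in Hq; [|lra].
    unfold Rdiv in Hq; rewrite Rmult_assoc, Rinv_l in Hq; lra.
Qed.

Lemma Rabs_inner_le n x y : Rabs (inner n x y) <= norm n x * norm n y.
Proof.
  pose proof (inner_sq_le n x y) as H; rewrite <- !norm_sq in H.
  pose proof (norm_ge0 n x); pose proof (norm_ge0 n y).
  apply Rsqr_incr_0_var; [|nra].
  rewrite <- Rsqr_abs; unfold Rsqr; nra.
Qed.

Lemma inner_le_norm n x y : inner n x y <= norm n x * norm n y.
Proof. eapply Rle_trans; [apply Rle_abs | apply Rabs_inner_le]. Qed.

Lemma norm_triangle n a b c : norm n (vsub a c) <= norm n (vsub a b) + norm n (vsub b c).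
Proof.
  set (u := vsub a b); set (v := vsub b c).
  replace (vsub a c) with (vadd u v) by (unfold u, v; vec_ext).
  pose proof (inner_le_norm n u v).
  pose proof (norm_ge0 n u); pose proof (norm_ge0 n v); pose proof (norm_ge0 n (vadd u v)).
  apply Rsqr_incr_0_var; unfold Rsqr; [|nra].
  pose proof (norm_sq n (vadd u v)); pose proof (norm_sq n u); pose proof (norm_sq n v).
  rewrite inner_add_add in H3; nra.
Qed.

Lemma Rle_0_of_le_mult_small c d :
  0 <= d -> (forall t, 0 < t <= 1 -> c <= t * d) -> c <= 0.
Proof.
  intros Hd H; apply Rnot_lt_le; intros Hc.
  specialize (H (c / (c + d))).
  assert (Ht : 0 < c / (c + d) <= 1).
  { split; [apply Rdiv_lt_0_compat; lra|].
    apply Rmult_le_reg_r with (c + d); [lra|]; field_simplify; lra. }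
  specialize (H Ht).
  assert (c * (c + d) <= c * d) by
    (replace (c * d) with (c / (c + d) * d * (c + d)) by (field; lra); nra).
  nra.
Qed.

Lemma proj_variational_ineq n S u p y :
  convex_in_Rn S -> is_proj n S u p -> S y -> inner n (vsub u p) (vsub y p) <= 0.
Proof.
  intros hS [Hp Hmin] Hy.
  set (a := vsub u p); set (b := vsub y p).
  apply (Rle_0_of_le_mult_small _ (inner n b b / 2)).
  { pose proof (inner_ge0 n b); lra. }
  intros t Ht.
  pose proof (Hmin _ (hS y p t Hy Hp ltac:(lra))) as H.
  replace (vsub u (vadd (vscal t y) (vscal (1 - t) p))) with (vsub a (vscal t b)) in H
    by (unfold a, b; vec_ext).
  apply inner_le_of_norm_le in H.
  rewrite (inner_sub_sub n a), !inner_scal_r, inner_scal_l in H; change (vsub u p) with a in H.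
  nra.
Qed.

Lemma gradient_continuous n S f g x :
  is_gradient_on n S f g -> S x ->
  forall eps, eps > 0 -> exists delta, delta > 0 /\
    forall y, S y -> norm n (vsub y x) < delta -> Rabs (f y - f x) < eps.
Proof.
  intros hg Hx eps He.
  destruct (hg x Hx) as [_ Hd]; destruct (Hd 1 ltac:(lra)) as [del [Hdel Hh]].
  set (K := norm n (g x) + 1).
  assert (HK : 0 < K) by (pose proof (norm_ge0 n (g x)); unfold K; lra).
  exists (Rmin del (eps / K)); split.
  { apply Rmin_glb_lt; [lra | apply Rdiv_lt_0_compat; lra]. }
  intros y Hy Hyx.
  pose proof (Rmin_l del (eps / K)); pose proof (Rmin_r del (eps / K)).
  specialize (Hh y Hy ltac:(lra)).
  pose proof (Rabs_inner_le n (g x) (vsub y x)).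
  pose proof (Rabs_triang (f y - f x - inner n (g x) (vsub y x)) (inner n (g x) (vsub y x))).
  replace (f y - f x - inner n (g x) (vsub y x) + inner n (g x) (vsub y x))
    with (f y - f x) in H2 by ring.
  assert (norm n (vsub y x) * K < eps).
  { apply Rmult_lt_reg_r with (/ K); [apply Rinv_0_lt_compat; lra|].
    rewrite Rmult_assoc, Rinv_r, Rmult_1_r by lra; unfold Rdiv in *; lra. }
  unfold K in *; nra.
Qed.

Definition clamp01 (t : R) : R := Rmax 0 (Rmin 1 t).

Lemma clamp01_in t : 0 <= clamp01 t <= 1.
Proof. unfold clamp01, Rmax, Rmin; repeat destruct Rle_dec; lra. Qed.

Lemma clamp01_id t : 0 <= t <= 1 -> clamp01 t = t.
Proof. unfold clamp01, Rmax, Rmin; repeat destruct Rle_dec; lra. Qed.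

Lemma clamp01_lipschitz s t : Rabs (clamp01 s - clamp01 t) <= Rabs (s - t).
Proof.
  unfold clamp01, Rmax, Rmin; repeat destruct Rle_dec;
    unfold Rabs; repeat destruct Rcase_abs; lra.
Qed.

Section DescentLemma.
Variables (n : nat) (X : vec -> Prop) (f : vec -> R) (g : vec -> vec) (L : R) (x y : vec).
Hypotheses (hXcv : convex_in_Rn X) (hgrad : is_gradient_on n X f g)
  (hLip : lipschitz_on n X g L) (hx : X x) (hy : X y).

Let d := vsub y x.
Let seg t := vadd (vscal t y) (vscal (1 - t) x).
(* [f] is only controlled on [X], so the segment is parametrised by a clamped
   parameter to obtain a function continuous on all of [R]. *)
Let phi t := f (seg (clamp01 t)).

Lemma seg_in t : 0 <= t <= 1 -> X (seg t).
Proof. intros; apply hXcv; auto. Qed.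

Lemma seg_sub s t : vsub (seg s) (seg t) = vscal (s - t) d.
Proof. unfold seg, d; vec_ext. Qed.

Lemma seg_sub_x t : vsub (seg t) x = vscal t d.
Proof. unfold seg, d; vec_ext. Qed.

Lemma seg_0 : seg 0 = x.
Proof. unfold seg; vec_ext. Qed.

Lemma seg_1 : seg 1 = y.
Proof. unfold seg; vec_ext. Qed.

Lemma phi_continuous t : continuity_pt phi t.
Proof.
  intros eps He.
  destruct (gradient_continuous n X f g _ hgrad (seg_in _ (clamp01_in t)) eps He)
    as [del [Hdel Hc]].
  pose proof (norm_ge0 n d).
  exists (del / (norm n d + 1)); split; [apply Rdiv_lt_0_compat; lra|].
  intros s [_ Hs]; simpl in Hs; unfold R_dist in Hs |- *; unfold phi.
  apply Hc; [apply seg_in, clamp01_in|].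
  rewrite seg_sub, norm_scal.
  pose proof (clamp01_lipschitz s t); pose proof (Rabs_pos (s - t)).
  assert (Rabs (s - t) * (norm n d + 1) < del).
  { apply Rmult_lt_reg_r with (/ (norm n d + 1)); [apply Rinv_0_lt_compat; lra|].
    rewrite Rmult_assoc, Rinv_r, Rmult_1_r by lra; exact Hs. }
  nra.
Qed.

Lemma phi_derivative t : 0 < t < 1 -> derivable_pt_lim phi t (inner n (g (seg t)) d).
Proof.
  intros Ht eps He.
  pose proof (norm_ge0 n d).
  destruct (proj2 (hgrad _ (seg_in t ltac:(lra))) (eps / (norm n d + 1)))
    as [del [Hdel Hh]]; [apply Rdiv_lt_0_compat; lra|].
  assert (Hpos : 0 < Rmin (del / (norm n d + 1)) (Rmin t (1 - t))).
  { apply Rmin_glb_lt; [apply Rdiv_lt_0_compat; lra | apply Rmin_glb_lt; lra]. }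
  exists (mkposreal _ Hpos); intros h Hh0 Hha; simpl in Hha.
  pose proof (Rmin_l (del / (norm n d + 1)) (Rmin t (1 - t))).
  pose proof (Rmin_r (del / (norm n d + 1)) (Rmin t (1 - t))).
  pose proof (Rmin_l t (1 - t)); pose proof (Rmin_r t (1 - t)).
  assert (Habs : - Rabs h <= h <= Rabs h) by (unfold Rabs; destruct Rcase_abs; lra).
  assert (Hhpos : 0 < Rabs h) by (apply Rabs_pos_lt; auto).
  unfold phi; rewrite (clamp01_id (t + h)), (clamp01_id t) by lra.
  assert (Hstep : Rabs h * norm n d < del).
  { assert (Rabs h * (norm n d + 1) < del).
    { apply Rmult_lt_reg_r with (/ (norm n d + 1)); [apply Rinv_0_lt_compat; lra|].
      rewrite Rmult_assoc, Rinv_r, Rmult_1_r by lra; unfold Rdiv in *; lra. }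
    nra. }
  specialize (Hh (seg (t + h)) (seg_in (t + h) ltac:(lra))).
  rewrite seg_sub, norm_scal, inner_scal_r in Hh.
  replace (t + h - t) with h in Hh by ring.
  specialize (Hh Hstep).
  replace ((f (seg (t + h)) - f (seg t)) / h - inner n (g (seg t)) d) with
    ((f (seg (t + h)) - f (seg t) - h * inner n (g (seg t)) d) / h) by (field; auto).
  unfold Rdiv; rewrite Rabs_mult, Rabs_inv.
  apply Rmult_lt_reg_r with (Rabs h); [auto|].
  rewrite Rmult_assoc, Rinv_l, Rmult_1_r by lra.
  eapply Rle_lt_trans; [apply Hh|].
  assert (eps / (norm n d + 1) * norm n d < eps).
  { apply Rmult_lt_reg_r with (norm n d + 1); [lra|].
    replace (eps / (norm n d + 1) * norm n d * (norm n d + 1)) with (eps * norm n d)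
      by (field; lra).
    nra. }
  nra.
Qed.

Lemma descent_lemma : f y <= f x + inner n (g x) d + L / 2 * inner n d d.
Proof.
  (* mean value theorem for phi minus its quadratic model along the segment *)
  set (P t := t * inner n (g x) d + L / 2 * (t * t) * inner n d d).
  set (dP t := inner n (g x) d + L * t * inner n d d).
  destruct (MVT_gen (fun t => phi t - P t) 0 1
              (fun t => inner n (g (seg t)) d - dP t)) as [c [Hc Hmvt]].
  - rewrite Rmin_left, Rmax_right by lra; intros t Ht.
    apply is_derive_Reals, derivable_pt_lim_minus; [apply phi_derivative; auto|].
    apply is_derive_Reals; unfold P, dP; auto_derive; auto; field.
  - intros t _; apply continuity_pt_minus; [apply phi_continuous|]; unfold P; reg.
  - rewrite Rmin_left, Rmax_right in Hc by lra.
    assert (Hslope : inner n (g (seg c)) d <= dP c).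
    { pose proof (inner_le_norm n (vsub (g (seg c)) (g x)) d) as Hcs.
      rewrite inner_sub_l in Hcs.
      pose proof (hLip _ _ (seg_in c Hc) hx) as Hl.
      rewrite seg_sub_x, norm_scal, Rabs_pos_eq in Hl by lra.
      pose proof (norm_ge0 n d); pose proof (norm_sq n d).
      assert (norm n (vsub (g (seg c)) (g x)) * norm n d <= L * (c * norm n d) * norm n d)
        by (apply Rmult_le_compat_r; auto).
      unfold dP; nra. }
    unfold phi, P in Hmvt; rewrite (clamp01_id 1), (clamp01_id 0), seg_1, seg_0 in Hmvt by lra.
    nra.
Qed.

End DescentLemma.

Lemma inv_succ_small eps : eps > 0 -> exists K, forall k, (K <= k)%nat -> / (INR k + 1) < eps.
Proof.
  intros He; destruct (archimed_cor1 eps He) as [K [HK HK0]]; exists K; intros k Hk.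
  apply lt_INR in HK0; apply le_INR in Hk; simpl in HK0.
  eapply Rle_lt_trans; [|exact HK].
  apply Rinv_le_contravar; lra.
Qed.

Lemma inner_cv_of_coord_cv m (p : vec) (ys : nat -> vec) :
  (forall i, (i < m)%nat -> Un_cv (fun k => ys k i) (p i)) ->
  forall eps, eps > 0 -> exists K, forall k, (K <= k)%nat ->
    inner m (vsub p (ys k)) (vsub p (ys k)) < eps.
Proof.
  induction m as [|m IH]; intros Hcv eps He.
  - exists 0%nat; intros; unfold inner; simpl; lra.
  - destruct (IH (fun i Hi => Hcv i ltac:(lia)) (eps / 2) ltac:(lra)) as [K1 H1].
    destruct (Hcv m ltac:(lia) (sqrt (eps / 2))) as [K2 H2]; [apply sqrt_lt_R0; lra|].
    exists (Nat.max K1 K2); intros k Hk.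
    specialize (H1 k ltac:(lia)); specialize (H2 k ltac:(lia)); unfold Rdist in H2.
    assert (Hm : Rsqr (ys k m - p m) < eps / 2).
    { rewrite Rsqr_abs, <- (sqrt_sqrt (eps / 2)) by lra.
      pose proof (Rabs_pos (ys k m - p m)); unfold Rsqr; nra. }
    unfold inner, Rsqr in *; simpl; unfold vsub at 3 4; nra.
Qed.

Lemma Rn_complete n (ys : nat -> vec) :
  (forall k, inRn n (ys k)) ->
  (forall eps, eps > 0 -> exists K, forall k m, (K <= k)%nat -> (K <= m)%nat ->
     inner n (vsub (ys k) (ys m)) (vsub (ys k) (ys m)) < eps) ->
  exists p, inRn n p /\
    forall eps, eps > 0 -> exists K, forall k, (K <= k)%nat -> norm n (vsub p (ys k)) < eps.
Proof.
  intros Hn Hcau.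
  assert (Hcoord : forall i, Cauchy_crit (fun k => ys k i)).
  { intros i eps He; unfold Rdist.
    destruct (Nat.lt_ge_cases i n) as [Hi|Hi].
    - destruct (Hcau (eps * eps) ltac:(nra)) as [K HK]; exists K; intros k m Hk Hm.
      pose proof (coord_sq_le_inner n (vsub (ys k) (ys m)) i Hi) as Hc.
      specialize (HK k m Hk Hm); unfold vsub at 1 2 in Hc.
      apply Rsqr_incrst_0; [rewrite <- Rsqr_abs; unfold Rsqr; lra | apply Rabs_pos | lra].
    - exists 0%nat; intros k m _ _.
      rewrite (Hn k i ltac:(lia)), (Hn m i ltac:(lia)), Rminus_0_r, Rabs_R0; lra. }
  set (p i := proj1_sig (R_complete _ (Hcoord i))).
  assert (Hp : forall i, Un_cv (fun k => ys k i) (p i)).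
  { intro i; unfold p; destruct R_complete; auto. }
  exists p; split.
  - intros i Hi; apply (UL_sequence (fun k => ys k i)); auto.
    intros eps He; exists 0%nat; intros k _; unfold Rdist.
    rewrite (Hn k i Hi), Rminus_0_r, Rabs_R0; lra.
  - intros eps He.
    destruct (inner_cv_of_coord_cv n p ys (fun i _ => Hp i) (eps * eps) ltac:(nra)) as [K HK].
    exists K; intros k Hk; specialize (HK k Hk).
    pose proof (norm_sq n (vsub p (ys k))); pose proof (norm_ge0 n (vsub p (ys k))); nra.
Qed.

Section Projection.
Variables (n : nat) (S : vec -> Prop) (u : vec).
Hypotheses (hsub : subset_Rn n S) (hcl : closed_in_Rn n S) (hcv : convex_in_Rn S)
  (hne : exists y, S y).

Lemma dist_glb : exists d, 0 <= d /\ (forall y, S y -> d <= norm n (vsub u y)) /\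
  (forall eps, eps > 0 -> exists y, S y /\ norm n (vsub u y) < d + eps).
Proof.
  set (E r := exists y, S y /\ r = - norm n (vsub u y)).
  assert (Hb : bound E).
  { exists 0; intros r [y [_ ->]]; pose proof (norm_ge0 n (vsub u y)); lra. }
  assert (Hne : exists r, E r).
  { destruct hne as [y Hy]; exists (- norm n (vsub u y)), y; auto. }
  destruct (completeness E Hb Hne) as [m [Hub Hlub]].
  exists (- m); split; [|split].
  - enough (m <= 0) by lra.
    apply Hlub; intros r [y [_ ->]]; pose proof (norm_ge0 n (vsub u y)); lra.
  - intros y Hy; enough (- norm n (vsub u y) <= m) by lra.
    apply Hub; exists y; auto.
  - intros eps He; apply NNPP; intros Hno.
    enough (m <= m - eps) by lra.
    apply Hlub; intros r [y [Hy ->]]; apply Rnot_lt_le; intros Hlt.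
    apply Hno; exists y; split; auto; lra.
Qed.

Lemma proj_exists : exists p, is_proj n S u p.
Proof.
  destruct dist_glb as [d [Hd0 [Hlow Happ]]].
  assert (Hex : forall k : nat, exists y, S y /\ norm n (vsub u y) < d + / (INR k + 1)).
  { intro k; apply Happ, Rinv_0_lt_compat; pose proof (pos_INR k); lra. }
  destruct (choice _ Hex) as [ys Hys].
  assert (Hek : forall k, 0 < / (INR k + 1) <= 1).
  { intro k; pose proof (pos_INR k); split; [apply Rinv_0_lt_compat; lra|].
    rewrite <- Rinv_1; apply Rinv_le_contravar; lra. }
  (* parallelogram law at the midpoint, which is no closer to [u] than [d] *)
  assert (Hpar : forall k m, inner n (vsub (ys k) (ys m)) (vsub (ys k) (ys m)) <=
     2 * Rsqr (d + / (INR k + 1)) + 2 * Rsqr (d + / (INR m + 1)) - 4 * Rsqr d).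
  { intros k m; destruct (Hys k) as [Sk Nk]; destruct (Hys m) as [Sm Nm].
    pose proof (Hlow _ (hcv _ _ (1 / 2) Sk Sm ltac:(lra))) as Hmid.
    rewrite (parallelogram n u); rewrite <- !norm_sq.
    pose proof (norm_ge0 n (vsub u (ys k))); pose proof (norm_ge0 n (vsub u (ys m))).
    unfold Rsqr; simpl; nra. }
  destruct (Rn_complete n ys (fun k => hsub _ (proj1 (Hys k)))) as [p [Hpn Hlim]].
  { intros eps He.
    destruct (inv_succ_small (eps / (8 * d + 4))) as [K HK]; [apply Rdiv_lt_0_compat; lra|].
    exists K; intros k m Hk Hm.
    pose proof (HK k Hk); pose proof (HK m Hm); pose proof (Hek k); pose proof (Hek m).
    eapply Rle_lt_trans; [apply Hpar|].
    replace eps with ((8 * d + 4) * (eps / (8 * d + 4))) by (field; lra).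
    unfold Rsqr; nra. }
  assert (Sp : S p).
  { apply hcl; auto; intros eps He; destruct (Hlim eps He) as [K HK].
    exists (ys K); split; [apply Hys | apply HK; lia]. }
  exists p; split; auto; intros y Sy.
  apply Rle_trans with d; [|apply Hlow; auto].
  apply Rnot_lt_le; intros Hgt.
  set (e := (norm n (vsub u p) - d) / 2).
  destruct (inv_succ_small e ltac:(unfold e; lra)) as [K1 H1].
  destruct (Hlim e ltac:(unfold e; lra)) as [K2 H2].
  set (k := Nat.max K1 K2).
  specialize (H1 k ltac:(lia)); specialize (H2 k ltac:(lia)).
  pose proof (norm_triangle n u (ys k) p); rewrite (norm_sub_sym n (ys k) p) in H.
  pose proof (proj2 (Hys k)); unfold e in *; lra.
Qed.

End Projection.

Lemma optset_convex X f fstar :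
  convex_in_Rn X -> convex_on X f -> (forall x, X x -> fstar <= f x) ->
  convex_in_Rn (optset X f fstar).
Proof.
  intros hXcv hfcv hlb a b t [Ha Fa] [Hb Fb] Ht; split; [apply hXcv; auto|].
  pose proof (hfcv a b t Ha Hb Ht); pose proof (hlb _ (hXcv a b t Ha Hb Ht)).
  rewrite Fa, Fb in H; nra.
Qed.

Lemma projected_gradient_decrease n X f g L x xp :
  convex_in_Rn X -> is_gradient_on n X f g -> L > 0 -> lipschitz_on n X g L -> X x ->
  is_proj n X (vsub x (vscal (/ L) (g x))) xp ->
  f xp <= f x - L / 2 * norm n (vsub x xp) ^ 2.
Proof.
  intros hXcv hg hL hLip Hx Hxp.
  pose proof (proj_variational_ineq n X _ xp x hXcv Hxp Hx) as Hvi.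
  replace (vsub (vsub x (vscal (/ L) (g x))) xp)
    with (vsub (vsub x xp) (vscal (/ L) (g x))) in Hvi by vec_ext.
  rewrite inner_sub_l, inner_scal_l in Hvi.
  assert (Hstep : L * inner n (vsub x xp) (vsub x xp) <= inner n (g x) (vsub x xp)).
  { apply Rmult_le_compat_l with (r := L) in Hvi; [|lra].
    rewrite Rmult_minus_distr_l, <- Rmult_assoc, Rinv_r, Rmult_1_l in Hvi by lra; lra. }
  pose proof (descent_lemma n X f g L x xp hXcv hg hLip Hx (proj1 Hxp)) as Hd.
  replace (vsub xp x) with (vscal (-1) (vsub x xp)) in Hd by vec_ext.
  rewrite inner_scal_r, inner_scal_l, inner_scal_r in Hd.
  rewrite norm_sq; nra.
Qed.

Theorem theorem5 (n : nat) (X : vec -> Prop) (f : vec -> R) (g : vec -> vec)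
  (Lf fstar beta : R)
  (hXsub : subset_Rn n X) (hXne : exists x, X x)
  (hXcl : closed_in_Rn n X) (hXcv : convex_in_Rn X)
  (hfcv : convex_on X f)
  (hgrad : is_gradient_on n X f g)
  (hL : Lf > 0) (hLip : lipschitz_on n X g Lf)
  (hfstar_lb : forall x, X x -> fstar <= f x)
  (hXstar_ne : exists x, optset X f fstar x)
  (hXstar_cl : closed_in_Rn n (optset X f fstar))
  (hbeta : 0 < beta < 1)
  (hEB : forall x xp xb xpb, X x ->
      is_proj n X (vsub x (vscal (/ Lf) (g x))) xp ->
      is_proj n (optset X f fstar) x xb ->
      is_proj n (optset X f fstar) xp xpb ->
      norm n (vsub xp xpb) <= beta * norm n (vsub x xb)) :
  forall x xb, X x -> is_proj n (optset X f fstar) x xb ->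
    f x - fstar >= (Lf * (1 - beta) ^ 2) / 2 * (norm n (vsub x xb)) ^ 2.
Proof.
  intros x xb Hx Hxb.
  assert (hXstar_sub : subset_Rn n (optset X f fstar)) by (intros y [Hy _]; auto).
  pose proof (optset_convex X f fstar hXcv hfcv hfstar_lb) as hXstar_cv.
  destruct (proj_exists n X (vsub x (vscal (/ Lf) (g x))) hXsub hXcl hXcv hXne) as [xp Hxp].
  destruct (proj_exists n _ xp hXstar_sub hXstar_cl hXstar_cv hXstar_ne) as [xpb Hxpb].
  assert (Hdist : (1 - beta) * norm n (vsub x xb) <= norm n (vsub x xp)).
  { pose proof (hEB x xp xb xpb Hx Hxp Hxb Hxpb).
    pose proof (proj2 Hxb _ (proj1 Hxpb)).
    pose proof (norm_triangle n x xp xpb); lra. }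
  pose proof (projected_gradient_decrease n X f g Lf x xp hXcv hgrad hL hLip Hx Hxp).
  pose proof (hfstar_lb _ (proj1 Hxp)).
  assert (((1 - beta) * norm n (vsub x xb)) ^ 2 <= norm n (vsub x xp) ^ 2).
  { apply pow_incr; split; [apply Rmult_le_pos; [lra | apply norm_ge0] | exact Hdist]. }
  rewrite Rpow_mult_distr in H1; nra.
Qed.
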